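(* Let $(|B(\lambda)\rangle,\mathcal{M})$ be an $N$-regular quantum scenario that is a paradox. Then: 1. For any $z_0,z_1\in\{0,1\}$, $\bigoplus_{j}r(j,0,z_0)\neq\bigoplus_{j}r(j,1,z_1)$. 2. For each $l\in\{0,1\}$, $\bigoplus_{j}r(j,l,0)=\bigoplus_{j}r(j,l,1)$. (Here $j$ ranges over $0,\dots,N-1$.)
   Context: $\equiv$ is equality modulo $2\pi$; $\oplus$ is addition mod 2. For $\varphi\in\mathbb{R}$, $E_\varphi=\cos\varphi X+\sin\varphi Y$, with $+1$ eigenvector $|\varphi\rangle=\frac{1}{\sqrt2}(|0\rangle+e^{i\varphi}|1\rangle)$ and $-1$ eigenvector $|\varphi+\pi\rangle$; outcomes $+1,-1$ relabelled $0,1$; measurements identified with angles. A measurement scenario $\mathcal{M}=(M_1,M_2,M_3)$ consists of finite sets $M_i\subseteq[0,\pi)$ of angles for qubit $i$; contexts are triples in $M_1\times M_2\times M_3$. For a three-qubit state $|\psi\rangle$, the event $(A,B,C)\to(a,b,c)$ is impossible if $(\langle A+a\pi|\otimes\langle B+b\pi|\otimes\langle C+c\pi|)|\psi\rangle=0$; $(|\psi\rangle,\mathcal{M})$ is a paradox if for every assignment $g$ of outcomes in $\{0,1\}$ to all measurements of $M_1,M_2,M_3$ (as disjoint sets) some context $(A,B,C)$ has $(A,B,C)\to(g(A),g(B),g(C))$ impossible. For $\lambda\in[0,\frac{\pi}{2})$, $|v_\lambda\rangle=\cos\frac{\lambda}{2}|0\rangle+\sin\frac{\lambda}{2}|1\rangle$,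 $|w_\lambda\rangle=\sin\frac{\lambda}{2}|0\rangle+\cos\frac{\lambda}{2}|1\rangle$, $|B(\lambda)\rangle=\frac{1}{\sqrt2}(|00\rangle|v_\lambda\rangle+|11\rangle|w_\lambda\rangle)$. Define modulo $2\pi$: $\beta(\lambda,\varphi)=\varphi-2\arctan\left(\frac{\cos\frac{\lambda}{2}\sin\varphi}{\sin\frac{\lambda}{2}+\cos\frac{\lambda}{2}\cos\varphi}\right)$. For $|B(\lambda)\rangle$, $(A,B,C)\to(a,b,c)$ is impossible iff $A+B\equiv\beta(\lambda,C+c\pi)+(1\oplus a\oplus b)\pi$. $(|B(\lambda)\rangle,\mathcal{M})$ is maximally impossible if for every $C\in M_3$ and $z\in\{0,1\}$: every $A\in M_1$ admits $B\in M_2$, $a,b$ with $(A,B,C)\to(a,b,z)$ impossible, and every $B\in M_2$ admits $A\in M_1$, $a,b$ with $(A,B,C)\to(a,b,z)$ impossible. Then $|M_1|=|M_2|=:N$; write $M_1=\{A_0,\dots,A_{N-1}\}$, $M_2=\{B_0,\dots,B_{N-1}\}$, $M_3=\{C_0,\dots,C_{n-1}\}$; for each $(j,l,z)$ there is a unique $k=:K(j,l,z)$ with $A_j+B_k-\beta(\lambda,C_l+z\pi)$ an integer multiple of $\pi$, and $r(j,l,z)\in\{0,1\}$ is defined by $A_j+B_{K(j,l,z)}-\beta(\lambda,C_l+z\pi)\equiv r(j,l,z)\pi$. $\Psi_l(z)$ is the $\mathbb{Z}_2$-linear system $\{a_j\oplus b_{K(j,l,z)}=r(j,l,z):j=0,\dots,N-1\}$.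 With $n=2$, maximal rank means for all $z_0,z_1$ the coefficient matrix of $\Psi_0(z_0)\cup\Psi_1(z_1)$ has rank $2N-1$ over $\mathbb{Z}_2$. $N$-regular: maximally impossible and of maximal rank, with $|M_1|=|M_2|=N$ and $M_3=\{C_0,C_1\}$. *)

From Stdlib Require Import Reals.
From mathcomp Require Import all_boot all_algebra.
Local Open Scope R_scope.
Set Implicit Arguments. Unset Strict Implicit. Unset Printing Implicit Defensive.

Definition cpx : Type := (R * R)%type.
Definition c0 : cpx := (0, 0).
Definition cre (x : R) : cpx := (x, 0).
Definition cadd (u v : cpx) : cpx := (u.1 + v.1, u.2 + v.2).
Definition cmul (u v : cpx) : cpx := (u.1 * v.1 - u.2 * v.2, u.1 * v.2 + u.2 * v.1).
Definition cconj (u : cpx) : cpx := (u.1, - u.2).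
Definition cexpi (t : R) : cpx := (cos t, sin t).

(** A one-qubit vector is a function bool -> cpx (false = |0>, true = |1>);
    a three-qubit vector is bool -> bool -> bool -> cpx. *)
Definition qubit := bool -> cpx.
Definition qubit3 := bool -> bool -> bool -> cpx.

(** |phi> = (|0> + e^{i phi}|1>)/sqrt 2, the +1 eigenvector of E_phi. *)
Definition ket (phi : R) : qubit :=
  fun x => if x then cmul (cre (/ sqrt 2)) (cexpi phi) else cre (/ sqrt 2).

(** Angle of outcome a of measurement A : |A + a pi>. *)
Definition outc (A : R) (a : bool) : R := (A + (if a then PI else 0)).

Definition vl (l : R) : qubit := fun x => if x then cre (sin (l / 2)) else cre (cos (l / 2)).
Definition wl (l : R) : qubit := fun x => if x then cre (cos (l / 2)) else cre (sin (l / 2)).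
Definition Bstate (l : R) : qubit3 := fun x y z =>
  match x, y with
  | false, false => cmul (cre (/ sqrt 2)) (vl l z)
  | true, true => cmul (cre (/ sqrt 2)) (wl l z)
  | _, _ => c0
  end.

Definition sum2 (f : bool -> cpx) : cpx := cadd (f false) (f true).

Definition amplitude (psi : qubit3) (p q r : qubit) : cpx :=
  sum2 (fun x => sum2 (fun y => sum2 (fun z =>
    cmul (cmul (cmul (cconj (p x)) (cconj (q y))) (cconj (r z))) (psi x y z)))).

Definition impossible (psi : qubit3) (A B C : R) (a b c : bool) : Prop :=
  amplitude psi (ket (outc A a)) (ket (outc B b)) (ket (outc C c)) = c0.

Definition eqmod2pi (x y : R) : Prop := exists k : Z, (x - y) = (IZR k * (2 * PI)).
Definition int_mult_pi (x : R) : Prop := exists k : Z, x = (IZR k * PI).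

(** When the denominator vanishes, the arctan is taken as its limit
    value pi/2 (2 arctan = pi, which is also -pi mod 2 pi). *)
Definition beta (l phi : R) : R :=
  let num := (cos (l / 2) * sin phi) in
  let den := (sin (l / 2) + cos (l / 2) * cos phi) in
  if Req_EM_T den 0 then (phi - PI) else (phi - 2 * atan (num / den)).

(** A measurement scenario with M1 = {A 0, ..., A (N-1)}, M2 = {B 0, ..., B (N-1)},
    M3 = {C 0, C 1}: angles in [0, pi), pairwise distinct within each set. *)
Definition lam_range (l : R) : Prop := 0 <= l < PI / 2.
Definition in_0pi (x : R) : Prop := (0 <= x < PI).
Definition scenario (N : nat) (A B C : nat -> R) : Prop :=
  (forall j, (j < N)%N -> in_0pi (A j)) /\
  (forall k, (k < N)%N -> in_0pi (B k)) /\
  (forall l, (l < 2)%N -> in_0pi (C l)) /\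
  (forall j j', (j < N)%N -> (j' < N)%N -> A j = A j' -> j = j') /\
  (forall k k', (k < N)%N -> (k' < N)%N -> B k = B k' -> k = k') /\
  C 0%N <> C 1%N.

Definition paradox (psi : qubit3) (N : nat) (A B C : nat -> R) : Prop :=
  forall gA gB gC : nat -> bool,
    exists j k l, (j < N)%N /\ (k < N)%N /\ (l < 2)%N /\
      impossible psi (A j) (B k) (C l) (gA j) (gB k) (gC l).

Definition max_impossible (psi : qubit3) (N : nat) (A B C : nat -> R) : Prop :=
  forall l (z : bool), (l < 2)%N ->
    (forall j, (j < N)%N -> exists k a b, (k < N)%N /\ impossible psi (A j) (B k) (C l) a b z) /\
    (forall k, (k < N)%N -> exists j a b, (j < N)%N /\ impossible psi (A j) (B k) (C l) a b z).

Definition K_r_spec (lam : R) (N : nat) (A B C : nat -> R)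
    (K : nat -> nat -> bool -> nat) (r : nat -> nat -> bool -> bool) : Prop :=
  forall j l (z : bool), (j < N)%N -> (l < 2)%N ->
    (K j l z < N)%N /\
    int_mult_pi (A j + B (K j l z) - beta lam (outc (C l) z)) /\
    (forall k, (k < N)%N -> int_mult_pi (A j + B k - beta lam (outc (C l) z)) -> k = K j l z) /\
    eqmod2pi (A j + B (K j l z) - beta lam (outc (C l) z)) (if r j l z then PI else 0).

(** Coefficient matrix over Z_2 of Psi_0(z0) U Psi_1(z1) in the unknowns
    a_0..a_{N-1}, b_0..b_{N-1} (column c < N is a_c, column N + k is b_k);
    row i < N is the equation a_i + b_{K i 0 z0}, row N + j is a_j + b_{K j 1 z1}. *)
Definition coef_mx (N : nat) (K : nat -> nat -> bool -> nat) (z0 z1 : bool)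
    : 'M['F_2]_(N + N, N + N) :=
  \matrix_(i < N + N, c < N + N)
    (let: (j, l, z) := if (i < N)%N then (nat_of_ord i, 0%N, z0) else ((i - N)%N, 1%N, z1) in
     ((c == j :> nat)%:R + (c == (N + K j l z)%N :> nat)%:R)%R).

Definition maximal_rank (N : nat) (K : nat -> nat -> bool -> nat) : Prop :=
  forall z0 z1 : bool, \rank (coef_mx N K z0 z1) = (2 * N - 1)%N.

Definition N_regular (lam : R) (N : nat) (A B C : nat -> R) (K : nat -> nat -> bool -> nat) : Prop :=
  max_impossible (Bstate lam) N A B C /\ maximal_rank N K.

Definition xorsum (N : nat) (f : nat -> bool) : bool := \big[addb/false]_(j < N) f j.

From Stdlib Require Import Reals Lra Lia.
From mathcomp Require Import all_boot all_algebra.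

(* An impossible event (A_j, B_k, C_l) -> (a, b, z) of |B(lambda)> forces k = K(j, l, z) and
   a + b = 1 + r(j, l, z) over Z_2.  Maximal impossibility makes each j |-> K(j, l, z) a
   bijection, so every column of the coefficient matrix of Psi_0(z0) U Psi_1(z1) has exactly
   two ones: the all-ones vector lies in its left kernel, which is a line by maximal rank.
   If the two parities of r agreed, the right-hand side would be orthogonal to that line, so
   the system would have a solution (a, b); with c_l := z_l this is an outcome assignment
   avoiding every impossible event, contradicting the paradox.  The second claim follows from
   the first since Z_2 has two elements. *)

Import GRing.Theory.

Set Implicit Arguments.
Unset Strict Implicit.
Unset Printing Implicit Defensive.

Section Angles.
Local Open Scope R_scope.

Lemma cos_eq1_eqmod2pi x y : cos (x - y) = 1 -> eqmod2pi x y.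
Proof.
move=> cos1; have := cos_2a_sin ((x - y) / 2).
rewrite (_ : 2 * ((x - y) / 2) = x - y); last by field.
move=> cos2; have /sin_eq_0_0 [k hk] : sin ((x - y) / 2) = 0 by nra.
by exists k; lra.
Qed.

Lemma half_lambda_bounds lam : lam_range lam -> 0 <= sin (lam / 2) < cos (lam / 2).
Proof.
move=> [lam0 lam1]; have PI0 := PI_RGT_0.
split; first by apply: sin_ge_0; lra.
have : 0 < cos (lam / 2 + PI / 4) by apply: cos_gt_0; lra.
rewrite cos_plus cos_PI4 sin_PI4.
have : 0 < 1 / sqrt 2 by apply: Rdiv_lt_0_compat; [lra | apply: sqrt_lt_R0; lra].
nra.
Qed.

Lemma cos_2atan t : cos (2 * atan t) = (1 - t ^ 2) / (1 + t ^ 2).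
Proof.
have t2 : 0 < 1 + t ^ 2 by nra.
rewrite cos_2a cos_atan sin_atan /Rsqr.
have s2 := sqrt_sqrt (1 + t * t) ltac:(nra).
have s0 : sqrt (1 + t * t) <> 0 by move=> s0; rewrite s0 in s2; nra.
rewrite (_ : 1 + t ^ 2 = sqrt (1 + t * t) * sqrt (1 + t * t)); last by rewrite s2; ring.
by field.
Qed.

Lemma sin_2atan t : sin (2 * atan t) = 2 * t / (1 + t ^ 2).
Proof.
rewrite sin_2a cos_atan sin_atan /Rsqr.
have s2 := sqrt_sqrt (1 + t * t) ltac:(nra).
have s0 : sqrt (1 + t * t) <> 0 by move=> s0; rewrite s0 in s2; nra.
rewrite (_ : 1 + t ^ 2 = sqrt (1 + t * t) * sqrt (1 + t * t)); last by rewrite s2; ring.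
by field.
Qed.

(* Twice the argument of d + i n modulo 2 PI, with the convention of [beta] when d = 0. *)
Definition double_arg (n d : R) : R := if Req_EM_T d 0 then PI else 2 * atan (n / d).

Lemma beta_double_arg lam phi :
  beta lam phi
  = phi - double_arg (cos (lam / 2) * sin phi) (sin (lam / 2) + cos (lam / 2) * cos phi).
Proof. by rewrite /beta /double_arg; case: Req_EM_T. Qed.

Lemma cos_double_arg n d : d ^ 2 + n ^ 2 <> 0 ->
  cos (double_arg n d) * (d ^ 2 + n ^ 2) = d ^ 2 - n ^ 2.
Proof.
rewrite /double_arg; case: Req_EM_T => /= [d0 | d0] U0.
  by rewrite cos_PI d0 in U0 *; field; nra.
by rewrite cos_2atan; field; split=> //; nra.
Qed.

Lemma sin_double_arg n d : d ^ 2 + n ^ 2 <> 0 ->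
  sin (double_arg n d) * (d ^ 2 + n ^ 2) = 2 * d * n.
Proof.
rewrite /double_arg; case: Req_EM_T => /= [d0 | d0] U0.
  by rewrite sin_PI d0; ring.
by rewrite sin_2atan; field; split=> //; nra.
Qed.

Lemma amplitude_Bstate_eq0_system lam al be ga :
  amplitude (Bstate lam) (ket al) (ket be) (ket ga) = c0 ->
  let ch := cos (lam / 2) in let sh := sin (lam / 2) in
  let d := sh + ch * cos ga in let n := ch * sin ga in
  d * cos (al + be) - n * sin (al + be) = - (ch + sh * cos ga) /\
  n * cos (al + be) + d * sin (al + be) = - (sh * sin ga).
Proof.
move=> E ch sh d n; move: E.
rewrite /amplitude /sum2 /ket /Bstate /vl /wl /cmul /cconj /cadd /cre /cexpi /c0 /=.
case=> E1 E2.
have s4 : (/ sqrt 2) ^ 4 <> 0.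
  by apply: pow_nonzero; apply: Rinv_neq_0_compat; apply: sqrt2_neq_0.
rewrite /d /n /ch /sh cos_plus sin_plus.
by split; apply: (Rmult_eq_reg_l _ _ _ _ s4); lra.
Qed.

Lemma beta_den2_num2_neq0 lam ga : lam_range lam ->
  (sin (lam / 2) + cos (lam / 2) * cos ga) ^ 2 + (cos (lam / 2) * sin ga) ^ 2 <> 0.
Proof.
move=> lamR; move: (half_lambda_bounds lamR) (COS_bound ga) (sin2_cos2 ga); rewrite /Rsqr.
set ch := cos (lam / 2); set sh := sin (lam / 2); set cg := cos ga; set sg := sin ga.
move=> [sh0 shch] [cg_lb _] trig.
rewrite (_ : _ + _ = (ch - sh) ^ 2 + 2 * (sh * ch) * (1 + cg)); last by nra.
have : 0 <= sh * ch by nra.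
nra.
Qed.

(* With u = d + i n, ct + i st = e^{i th} and cg + i sg = e^{i ga}, the hypotheses say
   e^{i th} u = -(ch + sh e^{i ga}) = -e^{i ga} conj u, so Re (e^{i (th - ga)} u^2) = - |u|^2. *)
Lemma rotation_identity ch sh ct st cg sg :
  let d := sh + ch * cg in let n := ch * sg in
  d * ct - n * st = - (ch + sh * cg) -> n * ct + d * st = - (sh * sg) ->
  sg * sg + cg * cg = 1 ->
  (ct * cg + st * sg) * (d ^ 2 - n ^ 2) - (st * cg - ct * sg) * (2 * d * n) = - (d ^ 2 + n ^ 2).
Proof.
move=> d n X Y T.
have X0 : (cg * d + sg * n) * (d * ct - n * st + (ch + sh * cg)) = 0.
  by apply: Rmult_eq_0_compat_l; lra.
have Y0 : (cg * n - sg * d) * (n * ct + d * st + sh * sg) = 0.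
  by apply: Rmult_eq_0_compat_l; lra.
have T0 : sh * d * (sg * sg + cg * cg - 1) = 0 by apply: Rmult_eq_0_compat_l; lra.
rewrite /d /n in X0 Y0 T0 *; lra.
Qed.

Lemma amplitude_Bstate_eq0_mod2pi lam al be ga : lam_range lam ->
  amplitude (Bstate lam) (ket al) (ket be) (ket ga) = c0 ->
  eqmod2pi (al + be) (beta lam ga + PI).
Proof.
move=> lamR /amplitude_Bstate_eq0_system /= [X Y].
have key := rotation_identity X Y (sin2_cos2 ga).
have U0 := beta_den2_num2_neq0 (ga := ga) lamR.
rewrite beta_double_arg; apply: cos_eq1_eqmod2pi.
move: (cos_double_arg U0) (sin_double_arg U0); set m := double_arg _ _ => cm sm.
rewrite (_ : al + be - (ga - m + PI) = (al + be - ga + m) - PI); last by ring.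
rewrite cos_minus cos_PI sin_PI cos_plus cos_minus sin_minus.
apply: (Rmult_eq_reg_r _ _ _ _ U0).
rewrite -cm -sm in key; lra.
Qed.

Definition bpi (b : bool) : R := if b then PI else 0.

Lemma IZR_mul_PI_inj m n : IZR m * PI = IZR n * PI -> m = n.
Proof. by move/(Rmult_eq_reg_r _ _ _)/(_ PI_neq0)/eq_IZR. Qed.

Lemma eqmod2pi_outcomes x y z a b :
  eqmod2pi (outc x a + outc y b) (z + PI) -> eqmod2pi (x + y - z) (bpi (~~ (a (+) b))).
Proof.
rewrite /outc /bpi => -[k E].
by case: a b E => [] [] /= E; [exists (Z.sub k 1) | exists k | exists k | exists k];
  rewrite ?minus_IZR; lra.
Qed.

Lemma eqmod2pi_bpi_int_mult_pi x u : eqmod2pi x (bpi u) -> int_mult_pi x.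
Proof.
case=> k E; exists (Z.add (Z.mul 2 k) (Z.b2z u)).
by rewrite plus_IZR mult_IZR; case: u E => /= E; lra.
Qed.

Lemma eqmod2pi_bpi_inj x u v : eqmod2pi x (bpi u) -> eqmod2pi x (bpi v) -> u = v.
Proof.
case=> k Eu [l Ev].
have : IZR (Z.sub (Z.b2z u) (Z.b2z v)) * PI = IZR (Z.mul 2 (Z.sub l k)) * PI.
  by rewrite minus_IZR mult_IZR minus_IZR; case: u v Eu Ev => [] [] /= Eu Ev; lra.
by move/IZR_mul_PI_inj; rewrite /Z.b2z; case: u v {Eu Ev} => [] [] // E; exfalso; lia.
Qed.

Lemma in_0pi_int_mult_pi_eq x y q p :
  in_0pi x -> in_0pi y -> int_mult_pi (x + q - p) -> int_mult_pi (y + q - p) -> x = y.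
Proof.
move=> [x0 xPI] [y0 yPI] [k Ex] [l Ey]; have PI0 := PI_RGT_0.
have E : x - y = IZR (Z.sub k l) * PI by rewrite minus_IZR; lra.
have /lt_IZR kl_lt1 : IZR (Z.sub k l) < 1 by nra.
have /lt_IZR kl_gtm1 : -1 < IZR (Z.sub k l) by nra.
have kl0 : Z.sub k l = Z0 by lia.
by rewrite kl0 /= in E; lra.
Qed.

End Angles.

Section LinearAlgebraF2.
Local Open Scope ring_scope.

Lemma corank1_colspace (F : fieldType) m n (M : 'M[F]_(m, n)) (y : 'rV[F]_m)
    (v : 'cV[F]_m) :
  y != 0 -> \rank M = m.-1 -> y *m M = 0 -> y *m v = 0 -> exists w, M *m w = v.
Proof.
move=> y0 rkM yM yv.
have MT_ker : (M^T == kermx y^T)%MS.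
  have sub : (M^T <= kermx y^T)%MS by rewrite sub_kermx -trmx_mul yM trmx0.
  by rewrite -(mxrank_leqif_eq sub) mxrank_tr mxrank_ker mxrank_tr rank_rV y0 rkM subn1.
have /submxP [D vD] : (v^T <= M^T)%MS.
  by rewrite (eqmxP MT_ker) sub_kermx -trmx_mul yv trmx0.
by exists D^T; rewrite -[v]trmxK vD trmx_mul trmxK.
Qed.

Lemma F2_addrr (x : 'F_2) : x + x = 0.
Proof. exact: addrr_pchar2 (pchar_Fp (isT : prime 2)) x. Qed.

Definition b2F (b : bool) : 'F_2 := (b : nat)%:R.

Lemma b2F_addb a b : b2F (a (+) b) = b2F a + b2F b.
Proof. by case: a b => [] []; rewrite /b2F /= ?F2_addrr ?addr0 ?add0r. Qed.

Lemma b2F_inj : injective b2F.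
Proof. by move=> [] [] // /eqP; rewrite /b2F /= ?oner_eq0 // eq_sym oner_eq0. Qed.

Lemma b2F_eq1 (x : 'F_2) : b2F (x == 1) = x.
Proof. by case: x => [[|[|//]] lt2]; apply: val_inj. Qed.

Lemma b2F_xorsum N f : b2F (xorsum N f) = \sum_(j < N) b2F (f j).
Proof. by elim: N => [|N IH]; rewrite /xorsum ?big_ord0 // !big_ord_recr b2F_addb -IH. Qed.

Definition unique_preimages (N : nat) (f : nat -> nat) : Prop :=
  forall k, (k < N)%N -> exists! j, (j < N)%N /\ f j = k.

Lemma sum_preimage_indicator (R : pzSemiRingType) N f k :
  unique_preimages N f -> (k < N)%N -> \sum_(j < N) ((f j == k)%:R : R) = 1.
Proof.
move=> fP kN; have [j [[jN fj] j_uniq]] := fP k kN.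
rewrite (bigD1 (Ordinal jN)) //= fj eqxx big1 ?addr0 // => i /eqP i_neq.
case: eqP => // fi; case: i_neq; apply: val_inj.
exact: esym (j_uniq i (conj (ltn_ord i) fi)).
Qed.

Lemma sum_shifted_preimage_indicator (R : pzSemiRingType) N f c :
  unique_preimages N f -> (c < N + N)%N ->
  \sum_(j < N) ((c == N + f j)%N%:R : R) = (N <= c)%N%:R.
Proof.
move=> fP cNN; have [cN | Nc] := ltnP c N.
  by rewrite big1 // => j _; rewrite (ltn_eqF (leq_trans cN (leq_addr _ _))).
rewrite -(subnKC Nc); under eq_bigr do rewrite eqn_add2l eq_sym.
by apply: sum_preimage_indicator; rewrite // -(ltn_add2l N) subnKC.
Qed.

(* Coordinate of [w] at a natural-number index, [0] out of range. *)
Definition entry (R : pzSemiRingType) n (w : 'cV[R]_n) (k : nat) : R :=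
  \sum_(c < n) ((c == k :> nat)%:R * w c 0).


End LinearAlgebraF2.

Section CoefMatrix.
Local Open Scope ring_scope.
Variables (N : nat) (K : nat -> nat -> bool -> nat) (z0 z1 : bool).
Local Notation M := (coef_mx N K z0 z1).

Lemma coef_mx_lshift (j : 'I_N) c :
  M (lshift N j) c = (c == j :> nat)%:R + (c == N + K j 0 z0 :> nat)%N%:R.
Proof. by rewrite mxE /= ltn_ord. Qed.

Lemma coef_mx_rshift (j : 'I_N) c :
  M (rshift N j) c = (c == j :> nat)%:R + (c == N + K j 1 z1 :> nat)%N%:R.
Proof. by rewrite mxE /= ltnNge leq_addr /= addKn. Qed.

Lemma coef_mx_mul_lshift w (j : 'I_N) :
  (M *m w) (lshift N j) 0 = entry w j + entry w (N + K j 0 z0).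
Proof.
by rewrite mxE -big_split; apply: eq_bigr => c _; rewrite coef_mx_lshift mulrDl.
Qed.

Lemma coef_mx_mul_rshift w (j : 'I_N) :
  (M *m w) (rshift N j) 0 = entry w j + entry w (N + K j 1 z1).
Proof.
by rewrite mxE -big_split; apply: eq_bigr => c _; rewrite coef_mx_rshift mulrDl.
Qed.

Hypotheses (K0P : unique_preimages N (fun j => K j 0 z0))
           (K1P : unique_preimages N (fun j => K j 1 z1)).

Lemma ones_mul_coef_mx : (const_mx 1 : 'rV_(N + N)) *m M = 0.
Proof.
apply/rowP => c; rewrite !mxE big_split_ord /=.
under eq_bigr do rewrite [const_mx _ _ _]mxE mul1r coef_mx_lshift.
under [X in _ + X]eq_bigr do rewrite [const_mx _ _ _]mxE mul1r coef_mx_rshift.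
rewrite !big_split /= (sum_shifted_preimage_indicator _ K0P) //.
by rewrite (sum_shifted_preimage_indicator _ K1P) // addrACA !F2_addrr.
Qed.

Lemma coef_mx_system_solvable (rhs0 rhs1 : nat -> bool) :
  (0 < N)%N -> \rank M = (2 * N - 1)%N -> xorsum N rhs0 = xorsum N rhs1 ->
  exists gA gB : nat -> bool, forall j, (j < N)%N ->
    gA j (+) gB (K j 0 z0) = rhs0 j /\ gA j (+) gB (K j 1 z1) = rhs1 j.
Proof.
move=> N0 rkM rhs_eq.
pose v : 'cV['F_2]_(N + N) :=
  col_mx (\col_(j < N) b2F (rhs0 j)) (\col_(j < N) b2F (rhs1 j)).
have ones_neq0 : (const_mx 1 : 'rV['F_2]_(N + N)) != 0.
  by apply/eqP => /matrixP /(_ 0 (lshift N (Ordinal N0))) /eqP; rewrite !mxE oner_eq0.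
have ones_v : (const_mx 1 : 'rV_(N + N)) *m v = 0.
  apply/rowP => i; rewrite !mxE big_split_ord /=.
  under eq_bigr do rewrite [const_mx _ _ _]mxE mul1r col_mxEu mxE.
  under [X in _ + X]eq_bigr do rewrite [const_mx _ _ _]mxE mul1r col_mxEd mxE.
  by rewrite -!b2F_xorsum rhs_eq F2_addrr.
have rkM' : \rank M = (N + N).-1 by rewrite rkM addnn -mul2n subn1.
have [w Mw] := corank1_colspace ones_neq0 rkM' ones_mul_coef_mx ones_v.
exists (fun j => entry w j == 1), (fun k => entry w (N + k) == 1) => j jN.
move/matrixP: Mw => Mw.
have := Mw (lshift N (Ordinal jN)) 0; have := Mw (rshift N (Ordinal jN)) 0.
rewrite coef_mx_mul_lshift coef_mx_mul_rshift col_mxEu col_mxEd !mxE /= => E1 E0.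
by split; apply: b2F_inj; rewrite b2F_addb !b2F_eq1.
Qed.

End CoefMatrix.

Section Scenario.
Variables (lam : R) (N : nat) (A B C : nat -> R).
Variables (K : nat -> nat -> bool -> nat) (r : nat -> nat -> bool -> bool).
Hypotheses (lamR : lam_range lam) (KrP : K_r_spec lam N A B C K r).

Lemma impossible_event_K_r j k l a b c :
  (j < N)%N -> (k < N)%N -> (l < 2)%N ->
  impossible (Bstate lam) (A j) (B k) (C l) a b c -> k = K j l c /\ a (+) b = ~~ r j l c.
Proof.
move=> jN kN l2 /(amplitude_Bstate_eq0_mod2pi lamR) /eqmod2pi_outcomes ab_mod.
have [_ [_ [K_uniq r_mod]]] := KrP c jN l2.
have kK := K_uniq k kN (eqmod2pi_bpi_int_mult_pi ab_mod).
by rewrite -kK in r_mod; rewrite -(eqmod2pi_bpi_inj ab_mod r_mod) negbK.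
Qed.

Lemma K_unique_preimages l z :
  scenario N A B C -> max_impossible (Bstate lam) N A B C -> (l < 2)%N ->
  unique_preimages N (fun j => K j l z).
Proof.
move=> [A0pi [_ [_ [A_inj _]]]] maxP l2 k kN.
have [_ /(_ k kN) [j [a [b [jN imp]]]]] := maxP l z l2.
have [kK _] := impossible_event_K_r jN kN l2 imp.
exists j; split=> // j' [j'N Kj'].
have [_ [int_j _]] := KrP z jN l2; have [_ [int_j' _]] := KrP z j'N l2.
rewrite -kK in int_j; rewrite Kj' in int_j'.
exact: A_inj (in_0pi_int_mult_pi_eq (A0pi j jN) (A0pi j' j'N) int_j int_j').
Qed.

Lemma paradox_N_gt0 psi : paradox psi N A B C -> (0 < N)%N.
Proof. by move=> /(_ xpred0 xpred0 xpred0) [j [_ [_ [jN _]]]]; apply: leq_ltn_trans jN. Qed.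

Lemma regular_paradox_xorsum_neq :
  scenario N A B C -> N_regular lam N A B C K -> paradox (Bstate lam) N A B C ->
  forall z0 z1, xorsum N (fun j => r j 0 z0) <> xorsum N (fun j => r j 1 z1).
Proof.
move=> scP [maxP rkP] parP z0 z1 rhs_eq.
have K0P := K_unique_preimages z0 scP maxP (isT : 0 < 2).
have K1P := K_unique_preimages z1 scP maxP (isT : 1 < 2).
have [gA [gB gP]] :=
  coef_mx_system_solvable K0P K1P (paradox_N_gt0 parP) (rkP z0 z1) rhs_eq.
have [j [k [l [jN [kN [l2 imp]]]]]] := parP gA gB (fun l => if l == 0 then z0 else z1).
have [kK ab] := impossible_event_K_r jN kN l2 imp.
have [g0 g1] := gP j jN.
case: l l2 kK ab {imp} => [|[|//]] _ /= -> ab.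
- by move: ab; rewrite g0; case: (r j 0 z0).
- by move: ab; rewrite g1; case: (r j 1 z1).
Qed.

End Scenario.

Lemma bool_eq_of_neq (a b c : bool) : a <> c -> b <> c -> a = b.
Proof. by case: a b c => [] [] []. Qed.

Unset Implicit Arguments.

Theorem corollary18 (lam : R) (N : nat) (A B C : nat -> R)
    (K : nat -> nat -> bool -> nat) (r : nat -> nat -> bool -> bool) :
  lam_range lam ->
  scenario N A B C ->
  K_r_spec lam N A B C K r ->
  N_regular lam N A B C K ->
  paradox (Bstate lam) N A B C ->
  (forall z0 z1 : bool, xorsum N (fun j => r j 0%N z0) <> xorsum N (fun j => r j 1%N z1)) /\
  (forall l, (l < 2)%N -> xorsum N (fun j => r j l false) = xorsum N (fun j => r j l true)).
Proof.
move=> lamR scP KrP regP parP.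
have neq := regular_paradox_xorsum_neq lamR KrP scP regP parP.
split=> // -[|[|//]] _.
- exact: bool_eq_of_neq (neq false false) (neq true false).
- exact: bool_eq_of_neq (fun e => neq false false (esym e))
                         (fun e => neq false true (esym e)).
Qed.
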